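(* Let $\mathcal{R},\mathcal{R}_1,\ldots,\mathcal{R}_s,\mathcal{C},\mathcal{C}_1,\ldots,\mathcal{C}_t$ be partitions of $\{1,\ldots,n\}$ such that $\mathcal{R}$ is finer than each $\mathcal{R}_i$ and $\mathcal{C}$ is finer than each $\mathcal{C}_j$. Then \[ \mathcal{L}(\mathcal{R}_i\times\mathcal{C}:\ 1\le i\le s)\cap\mathcal{L}(\mathcal{R}\times\mathcal{C}_j:\ 1\le j\le t)=\mathcal{L}(\mathcal{R}_i\times\mathcal{C}_j:\ 1\le i\le s,\ 1\le j\le t). \]
   Context: $S_n$ is the group of permutations of $\{1,\ldots,n\}$. A partition $\mathcal{Z}$ is finer than $\mathcal{W}$ if every block of $\mathcal{Z}$ lies in some block of $\mathcal{W}$. For partitions $\mathcal{R}=(R_i)$, $\mathcal{C}=(C_j)$ of $\{1,\ldots,n\}$, the product partition $\mathcal{R}\times\mathcal{C}=(R_i\times C_j)$ of the $n\times n$ board has marginal $|\pi_{\mathcal{R}\times\mathcal{C}}|=(t_{ij})$, $t_{ij}=|\{s:(s,\pi(s))\in R_i\times C_j\}|$, for $\pi\in S_n$. $U^{\mathcal{B}}=\{v\in\mathbb{R}^{S_n}: |\pi_{\mathcal{B}}|=|\sigma_{\mathcal{B}}|\Rightarrow v(\pi)=v(\sigma)\}$. The log-linear model $\mathcal{L}(\mathcal{B}_1,\ldots,\mathcal{B}_m)$ is the set of strictly positive probability distributions $p$ on $S_n$ with $\log p\in\mathrm{Span}(U^{\mathcal{B}_1},\ldots,U^{\mathcal{B}_m})$.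 *)

From mathcomp Require Import all_boot all_fingroup.
From Stdlib Require Import Reals.
Set Implicit Arguments. Unset Strict Implicit. Unset Printing Implicit Defensive.

(* A partition of {1,...,n} (indexed as 'I_n = {0,...,n-1}). *)
Definition is_partition (n : nat) (P : {set {set 'I_n}}) : Prop :=
  partition P [set: 'I_n].

Definition finer (n : nat) (Z W : {set {set 'I_n}}) : Prop :=
  forall A, A \in Z -> exists2 B, B \in W & A \subset B.

(* Entry t_{A,B} of the marginal |pi_{Rp x Cp}|: number of s with
   (s, pi s) in A x B. *)
Definition marg (n : nat) (pi : 'S_n) (A B : {set 'I_n}) : nat :=
  #|[set s in A | pi s \in B]|.

Definition same_marg (n : nat) (Rp Cp : {set {set 'I_n}}) (pi sigma : 'S_n) : Prop :=
  forall A B, A \in Rp -> B \in Cp -> marg pi A B = marg sigma A B.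

Definition U (n : nat) (Rp Cp : {set {set 'I_n}}) (v : 'S_n -> R) : Prop :=
  forall pi sigma : 'S_n, same_marg Rp Cp pi sigma -> v pi = v sigma.

Definition in_span (n : nat) (Bs : seq ({set {set 'I_n}} * {set {set 'I_n}}))
  (f : 'S_n -> R) : Prop :=
  exists (k : nat) (c : nat -> R) (v : nat -> 'S_n -> R),
    (forall i, (i < k)%N -> exists2 B, B \in Bs & U B.1 B.2 (v i)) /\
    (forall pi, f pi = \big[Rplus/0%R]_(i < k) (c i * v i pi)%R).

(* Log-linear model L(B_1,...,B_m) with B_i product partitions. *)
Definition loglin (n : nat) (Bs : seq ({set {set 'I_n}} * {set {set 'I_n}}))
  (p : 'S_n -> R) : Prop :=
  (forall pi, (0 < p pi)%R) /\
  \big[Rplus/0%R]_(pi : 'S_n) p pi = 1%R /\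
  in_span Bs (fun pi => ln (p pi)).

(* A function on S_n lies in U^(P x Q) iff it is invariant under the row
   stabilizer of P acting on the left and under the column stabilizer of Q
   acting on the right (lemma [U_iff_inv]; the nontrivial direction says that
   permutations with equal marginals form a double coset).  Since a finer
   partition has a smaller stabilizer, the inclusion "right side included in
   the intersection" follows at once ([U_finer]).

   For the other inclusion let f be a combination of row-invariant functions
   v_k and of column-invariant functions w_l.  Let W be the span of all right
   translates of the v_k and P the orthogonal projection onto W (built by
   Gram-Schmidt).  W is translation invariant, so P commutes with right
   translations; hence P w_l is still column invariant, so it equals its
   column average, which is a combination of averages of translates of v_k,
   invariant on both sides.  As f lies in W, f = P f = sum_l c_l P w_l
   ([span_row_col_inv]). *)

From HB Require Import structures.
From Pilot Require Import Defs.
From mathcomp Require Import all_boot all_fingroup.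
From Stdlib Require Import Reals Lra FunctionalExtensionality.

Set Implicit Arguments. Unset Strict Implicit. Unset Printing Implicit Defensive.
Local Open Scope R_scope.

(* Addition and multiplication of Stdlib reals as monoid laws, so that the
   generic big-operator lemmas apply to the sums [\big[Rplus/0]] of Defs. *)
Lemma RplusA : associative Rplus. Proof. by move=> x y z; lra. Qed.
Lemma RmultDl : left_distributive Rmult Rplus. Proof. by move=> x y z; lra. Qed.
Lemma RmultDr : right_distributive Rmult Rplus. Proof. by move=> x y z; lra. Qed.
HB.instance Definition _ :=
  Monoid.isComLaw.Build R 0 Rplus RplusA Rplus_comm Rplus_0_l.
HB.instance Definition _ := Monoid.isMulLaw.Build R 0 Rmult Rmult_0_l Rmult_0_r.
HB.instance Definition _ := Monoid.isAddLaw.Build R Rmult Rplus RmultDl RmultDr.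

Lemma iter_Rplus k x : iter k (Rplus x) 0 = INR k * x.
Proof. by elim: k => [|k IH]; rewrite ?iterS ?IH ?S_INR /=; lra. Qed.

Section InnerProduct.
Variable T : finType.
Implicit Types (a b x w : T -> R) (S : (T -> R) -> Prop).

Definition inner a b := \big[Rplus/0]_(y : T) (a y * b y).

Lemma inner_sym a b : inner a b = inner b a.
Proof. by rewrite /inner; apply: eq_bigr => y _; lra. Qed.

Lemma inner0l b : inner (fun _ => 0) b = 0.
Proof. by rewrite /inner big1 // => y _; lra. Qed.

Lemma inner_addl a b x : inner (fun y => a y + b y) x = inner a x + inner b x.
Proof. by rewrite /inner -big_split /=; apply: eq_bigr => y _; ring. Qed.

Lemma inner_scalel k a b : inner (fun y => k * a y) b = k * inner a b.
Proof. by rewrite /inner big_distrr /=; apply: eq_bigr => y _; ring. Qed.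

Lemma inner_addr a b x : inner x (fun y => a y + b y) = inner x a + inner x b.
Proof. by rewrite !(inner_sym x) inner_addl. Qed.

Lemma inner_scaler k a b : inner a (fun y => k * b y) = k * inner a b.
Proof. by rewrite !(inner_sym a) inner_scalel. Qed.

Lemma inner_subl a b x : inner (fun y => a y - b y) x = inner a x - inner b x.
Proof.
have -> : (fun y => a y - b y) = (fun y => a y + -1 * b y).
  by apply: functional_extensionality => y; lra.
by rewrite inner_addl inner_scalel; lra.
Qed.

Lemma inner_self_eq0 a : inner a a = 0 -> forall y, a y = 0.
Proof.
move=> a_norm0 y; rewrite /inner (bigD1 y) //= in a_norm0.
have rest_ge0 : 0 <= \big[Rplus/0]_(z | z != y) (a z * a z).
  apply: big_ind => [|u v|z _]; [lra | lra | exact: Rle_0_sqr].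
have := Rle_0_sqr (a y); rewrite /Rsqr => sq_ge0.
have sq0 : a y * a y = 0 by lra.
by case: (Rmult_integral _ _ sq0).
Qed.

Inductive span S : (T -> R) -> Prop :=
  | span0 : span S (fun _ => 0)
  | span_step a w c : span S a -> S w -> span S (fun y => a y + c * w y).

Lemma span_gen S w : S w -> span S w.
Proof.
move=> Sw; have := span_step 1 (span0 S) Sw.
by have -> : (fun y => 0 + 1 * w y) = w by apply: functional_extensionality => y; lra.
Qed.

Lemma span_add S a b : span S a -> span S b -> span S (fun y => a y + b y).
Proof.
move=> Sa; elim=> [|b' w c _ IH Sw].
  by have -> : (fun y => a y + 0) = a by apply: functional_extensionality => y; lra.
have := span_step c IH Sw.
by have -> : (fun y => a y + b' y + c * w y) = (fun y => a y + (b' y + c * w y))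
  by apply: functional_extensionality => y; lra.
Qed.

Lemma span_scale S k a : span S a -> span S (fun y => k * a y).
Proof.
elim=> [|a' w c _ IH Sw].
  have -> : (fun _ : T => k * 0) = (fun _ => 0).
    by apply: functional_extensionality => y; lra.
  exact: span0.
have := span_step (k * c) IH Sw.
by have -> : (fun y => k * a' y + k * c * w y) = (fun y => k * (a' y + c * w y))
  by apply: functional_extensionality => y; lra.
Qed.

Lemma span_linear_image S S' (F : (T -> R) -> T -> R) a :
  F (fun _ => 0) = (fun _ => 0) ->
  (forall a w c, F (fun y => a y + c * w y) = (fun y => F a y + c * F w y)) ->
  (forall w, S w -> span S' (F w)) -> span S a -> span S' (F a).
Proof.
move=> F0 Flin FS; elim=> [|a' w c _ IH Sw]; first by rewrite F0; exact: span0.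
by rewrite Flin; apply: span_add => //; apply: span_scale; apply: FS.
Qed.

Lemma span_mono S S' a : (forall w, S w -> span S' w) -> span S a -> span S' a.
Proof.
move=> SS'; elim=> [|a' w c _ IH Sw]; first exact: span0.
by apply: span_add => //; apply: span_scale; apply: SS'.
Qed.

Lemma inner_span S x a :
  (forall w, S w -> inner x w = 0) -> span S a -> inner x a = 0.
Proof.
move=> xS; elim=> [|a' w c _ IH Sw]; first by rewrite inner_sym inner0l.
by rewrite inner_sym inner_addl inner_scalel !(inner_sym _ x) IH xS //; lra.
Qed.

Lemma span_finite S a : span S a ->
  exists vs, (forall v, List.In v vs -> S v) /\ span (fun v => List.In v vs) a.
Proof.
elim=> [|a' w c _ [vs [vs_S a'_span]] Sw]; first by exists nil; split=> //; exact: span0.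
exists (w :: vs); split; first by move=> v [<-|/vs_S].
apply: span_step; last by left.
by apply: span_mono a'_span => v v_in; apply: span_gen; right.
Qed.

Definition is_proj (ws : list (T -> R)) (P : (T -> R) -> T -> R) : Prop :=
  (forall x, span (fun v => List.In v ws) (P x)) /\
  (forall x w, List.In w ws -> inner (fun y => x y - P x y) w = 0).

Lemma proj_nil : is_proj nil (fun _ _ => 0).
Proof. by split=> [x|x w []]; exact: span0. Qed.

Lemma proj_cons_dep ws w Q :
  is_proj ws Q -> span (fun v => List.In v ws) w -> is_proj (w :: ws) Q.
Proof.
move=> [Q_span Q_orth] w_span; split=> [x|x w' [<-|w'_in]]; last exact: Q_orth.
  by apply: span_mono (Q_span x) => w' w'_in; apply: span_gen; right.
by apply: inner_span w_span => v v_in; exact: Q_orth.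
Qed.

(* Gram-Schmidt step, independent case: add to [Q x] the component of
   [x - Q x] along the nonzero residual [r = w - Q w]. *)
Definition gs_coef (Q : (T -> R) -> T -> R) r x :=
  inner (fun z => x z - Q x z) r / inner r r.

Lemma proj_cons_indep ws w Q (r := fun y => w y - Q w y) :
  is_proj ws Q -> inner r r <> 0 ->
  is_proj (w :: ws) (fun x y => Q x y + gs_coef Q r x * r y).
Proof.
move=> [Q_span Q_orth] r_neq0.
have lift a : span (fun v => List.In v ws) a -> span (fun v => List.In v (w :: ws)) a.
  by apply: span_mono => v v_in; apply: span_gen; right.
have r_span : span (fun v => List.In v (w :: ws)) r.
  have := span_add (span_gen (S := fun v => List.In v (w :: ws)) (or_introl erefl))
    (span_scale (-1) (lift _ (Q_span w))).
  by have -> : (fun y => w y + -1 * Q w y) = r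
    by apply: functional_extensionality => y; rewrite /r; lra.
have residual x : (fun y => x y - (Q x y + gs_coef Q r x * r y))
                  = (fun y => (x y - Q x y) - gs_coef Q r x * r y).
  by apply: functional_extensionality => y; lra.
have orth_ws x v : List.In v ws ->
    inner (fun y => x y - (Q x y + gs_coef Q r x * r y)) v = 0.
  move=> v_in; rewrite residual inner_subl inner_scalel Q_orth //.
  by rewrite (Q_orth w) //; lra.
split=> [x|x v [<-|]]; last exact: orth_ws.
  by apply: span_add; [exact: lift | exact: span_scale].
have -> : w = (fun y => r y + 1 * Q w y).
  by apply: functional_extensionality => y; rewrite /r; lra.
rewrite inner_addr inner_scaler (inner_span (orth_ws x) (Q_span w)).
rewrite residual inner_subl inner_scalel /gs_coef.
by field_simplify; [lra | exact: r_neq0].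
Qed.

Lemma proj_exists ws : exists P, is_proj ws P.
Proof.
elim: ws => [|w ws [Q Q_proj]]; first by exists (fun _ _ => 0); exact: proj_nil.
have [r_norm0|r_neq0] := Req_dec (inner (fun y => w y - Q w y)
                                          (fun y => w y - Q w y)) 0.
  exists Q; apply: proj_cons_dep => //.
  have r0 := inner_self_eq0 r_norm0.
  have := Q_proj.1 w.
  by have -> : Q w = w by apply: functional_extensionality => y; have := r0 y; lra.
by eexists; exact: (proj_cons_indep Q_proj r_neq0).
Qed.

Section Projection.
Variables (ws : list (T -> R)) (P : (T -> R) -> T -> R).
Hypothesis P_proj : is_proj ws P.

(* [P x] is characterised as the vector [a] of the span with [x - a]
   orthogonal to [ws]: the difference of two such vectors has norm zero. *)
Lemma proj_unique x a : span (fun v => List.In v ws) a ->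
  (forall w, List.In w ws -> inner (fun y => x y - a y) w = 0) -> P x = a.
Proof.
move=> a_span a_orth; have [P_span P_orth] := P_proj.
have diff_span : span (fun v => List.In v ws) (fun y => P x y + -1 * a y).
  by apply: span_add; [exact: P_span | exact: span_scale].
have diff_orth w : List.In w ws -> inner (fun y => P x y + -1 * a y) w = 0.
  move=> w_in; have -> : (fun y => P x y + -1 * a y)
                         = (fun y => (x y - a y) - (x y - P x y)).
    by apply: functional_extensionality => y; lra.
  by rewrite inner_subl a_orth // P_orth //; lra.
have diff0 := inner_self_eq0 (inner_span diff_orth diff_span).
by apply: functional_extensionality => y; have := diff0 y; lra.
Qed.

Lemma proj_fix a : span (fun v => List.In v ws) a -> P a = a.
Proof. by move=> a_span; apply: proj_unique => // w _; rewrite inner_subl; lra. Qed.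

Lemma proj0 : P (fun _ => 0) = (fun _ => 0).
Proof. exact/proj_fix/span0. Qed.

Lemma proj_step a w c : P (fun y => a y + c * w y) = (fun y => P a y + c * P w y).
Proof.
have [P_span P_orth] := P_proj.
apply: proj_unique => [|v v_in]; first by apply: span_add => //; apply: span_scale.
have -> : (fun y => a y + c * w y - (P a y + c * P w y))
          = (fun y => (a y - P a y) + c * (w y - P w y)).
  by apply: functional_extensionality => y; lra.
by rewrite inner_addl inner_scalel !P_orth //; lra.
Qed.

Lemma proj_commute (G G' : (T -> R) -> T -> R) x :
  G (fun _ => 0) = (fun _ => 0) ->
  (forall a w c, G (fun y => a y + c * w y) = (fun y => G a y + c * G w y)) ->
  (forall a b, inner (G a) b = inner a (G' b)) ->
  (forall w, List.In w ws -> span (fun v => List.In v ws) (G w)) ->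
  (forall w, List.In w ws -> span (fun v => List.In v ws) (G' w)) ->
  P (G x) = G (P x).
Proof.
move=> G0 Glin G_adj G_ws G'_ws; have [P_span P_orth] := P_proj.
apply: proj_unique => [|w w_in]; first exact: span_linear_image (P_span x).
have -> : (fun y => G x y - G (P x) y) = G (fun y => x y + -1 * P x y).
  by rewrite Glin; apply: functional_extensionality => y; lra.
rewrite G_adj; apply: inner_span (G'_ws w w_in) => v v_in.
have -> : (fun y => x y + -1 * P x y) = (fun y => x y - P x y).
  by apply: functional_extensionality => y; lra.
exact: P_orth.
Qed.

End Projection.
End InnerProduct.

Section BlockStabilizer.
Variable n : nat.
Implicit Types (P Q : {set {set 'I_n}}) (v : 'S_n -> R).

Lemma mem_block P A x : is_partition P -> A \in P -> (x \in A) = (pblock P x == A).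
Proof.
case/and3P => /eqP cover_P triv_P _ A_in; apply/idP/eqP => [x_in|<-].
  exact: def_pblock.
by rewrite mem_pblock cover_P inE.
Qed.

Lemma pblock_in P x : is_partition P -> pblock P x \in P.
Proof. by case/and3P => /eqP cover_P _ _; apply: pblock_mem; rewrite cover_P inE. Qed.

Definition stab P : {set 'S_n} :=
  [set h : 'S_n | [forall x, pblock P (h x) == pblock P x]].

Lemma stabP P (h : 'S_n) :
  reflect (forall x, pblock P (h x) = pblock P x) (h \in stab P).
Proof. by rewrite inE; apply: (iffP forallP) => h_stab x; apply/eqP. Qed.

Lemma stab_group_set P : group_set (stab P).
Proof.
apply/group_setP; split; first by apply/stabP => x; rewrite perm1.
by move=> g h /stabP g_stab /stabP h_stab; apply/stabP => x; rewrite permM h_stab.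
Qed.
Canonical stab_group P := Group (stab_group_set P).

Lemma finer_refl P : finer P P.
Proof. by move=> A A_in; exists A. Qed.

Lemma stab_finer P P' : is_partition P -> is_partition P' -> finer P P' ->
  {subset stab P <= stab P'}.
Proof.
move=> part_P part_P' finer_PP' g /stabP g_stab; apply/stabP => x.
have [B B_in sub] := finer_PP' _ (pblock_in x part_P).
have x_B : x \in B.
  by apply: (subsetP sub); rewrite (mem_block _ part_P (pblock_in x part_P)).
have gx_B : g x \in B.
  by apply: (subsetP sub); rewrite (mem_block _ part_P (pblock_in x part_P)) g_stab.
by move: x_B gx_B; rewrite !(mem_block _ part_P' B_in) => /eqP -> /eqP ->.
Qed.

Definition row_inv P v := forall pi h, h \in stab P -> v (h * pi)%g = v pi.
Definition col_inv Q v := forall pi g, g \in stab Q -> v (pi * g)%g = v pi.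

Lemma marg_row_stab P pi h A B : is_partition P -> A \in P -> h \in stab P ->
  marg (h * pi)%g A B = marg pi A B.
Proof.
move=> part_P A_in /stabP h_stab; rewrite /marg -[RHS](card_preimset _ (@perm_inj _ h)).
apply: eq_card => x; rewrite !inE permM.
by rewrite (mem_block x part_P A_in) (mem_block (h x) part_P A_in) h_stab.
Qed.

Lemma marg_col_stab Q pi g A B : is_partition Q -> B \in Q -> g \in stab Q ->
  marg (pi * g)%g A B = marg pi A B.
Proof.
move=> part_Q B_in /stabP g_stab; apply: eq_card => x.
by rewrite !inE permM (mem_block (g _) part_Q B_in) (mem_block (pi x) part_Q B_in) g_stab.
Qed.

Definition block_label P Q (pi : 'S_n) (x : 'I_n) := (pblock P x, pblock Q (pi x)).

Lemma count_block_label P Q pi A B : is_partition P -> is_partition Q ->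
  (count_mem (A, B) [seq block_label P Q pi x | x <- enum 'I_n]
   = if (A \in P) && (B \in Q) then marg pi A B else 0%nat)%nat.
Proof.
move=> part_P part_Q.
have -> : count_mem (A, B) [seq block_label P Q pi x | x <- enum 'I_n]
          = #|[pred x | block_label P Q pi x == (A, B)]|.
  rewrite count_map cardE /enum_mem size_filter count_filter.
  by apply: eq_count => x; rewrite !inE andbT.
case: ifP => [/andP [A_in B_in]|not_in].
  by apply: eq_card => x; rewrite !inE xpair_eqE -mem_block // -mem_block.
apply: eq_card0 => x; rewrite !inE xpair_eqE; apply/negP => /andP [/eqP eA /eqP eB].
by move: not_in; rewrite -eA -eB !pblock_in.
Qed.

Lemma same_marg_double_coset P Q pi sigma :
  is_partition P -> is_partition Q -> same_marg P Q pi sigma ->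
  exists h g, [/\ h \in stab P, g \in stab Q & sigma = (h * pi * g)%g].
Proof.
move=> part_P part_Q same.
pose lab_pi := [tuple block_label P Q pi x | x < n].
pose lab_sigma := [tuple block_label P Q sigma x | x < n].
have : perm_eq lab_sigma lab_pi.
  apply/allP => [[A B]] _; apply/eqP; rewrite !count_block_label //.
  by case: ifP => // /andP [A_in B_in]; rewrite same.
case/tuple_permP => h /val_inj lab_h.
have match_h x : block_label P Q sigma x = block_label P Q pi (h x).
  by have := congr1 (fun t => tnth t x) lab_h; rewrite !tnth_mktuple.
exists h, ((h * pi)^-1 * sigma)%g; split; last by rewrite mulgA mulgV mul1g.
  by apply/stabP => x; have [-> _] := match_h x.
apply/stabP => y; rewrite permM.
set x := ((h * pi)^-1)%g y; have y_def : y = pi (h x) by rewrite -permM /x permKV.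
by have [_ ->] := match_h x; rewrite y_def.
Qed.

Lemma U_iff_inv P Q v : is_partition P -> is_partition Q ->
  U P Q v <-> row_inv P v /\ col_inv Q v.
Proof.
move=> part_P part_Q; split=> [v_U|[v_row v_col] pi sigma same].
  split=> [pi h h_stab|pi g g_stab]; apply: v_U => A B A_in B_in.
    exact: (marg_row_stab pi B part_P A_in h_stab).
  exact: (marg_col_stab pi A part_Q B_in g_stab).
have [h [g [h_stab g_stab ->]]] := same_marg_double_coset part_P part_Q same.
by rewrite v_col // v_row.
Qed.

Lemma U_finer P P' Q Q' v :
  is_partition P -> is_partition P' -> is_partition Q -> is_partition Q' ->
  finer P P' -> finer Q Q' -> U P' Q' v -> U P Q v.
Proof.
move=> part_P part_P' part_Q part_Q' finer_P finer_Q.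
rewrite (U_iff_inv _ part_P' part_Q') (U_iff_inv _ part_P part_Q).
move=> [v_row v_col]; split=> pi g g_stab.
  by apply: v_row; exact: stab_finer finer_P _ g_stab.
by apply: v_col; exact: stab_finer finer_Q _ g_stab.
Qed.

End BlockStabilizer.

Lemma In_enum (T : finType) (x : T) : List.In x (enum T).
Proof.
have : x \in enum T by rewrite mem_enum.
by elim: (enum T) => [|y r IH] //=; rewrite in_cons => /orP [/eqP ->|/IH]; [left|right].
Qed.

Section Translation.
Variable n : nat.
Implicit Types (P Q : {set {set 'I_n}}) (v : 'S_n -> R).

Definition transl (g : 'S_n) v : 'S_n -> R := fun pi => v (pi * g)%g.

Definition avg Q v : 'S_n -> R :=
  fun pi => / INR #|stab Q| * \big[Rplus/0]_(g in stab Q) v (pi * g)%g.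

Lemma inner_transl g a b : inner (transl g a) b = inner a (transl g^-1 b).
Proof.
rewrite /inner /transl (reindex_inj (mulIg g^-1)%g) /=.
by apply: eq_bigr => pi _; rewrite -mulgA mulVg mulg1.
Qed.

Lemma transl_row_inv P g v : row_inv P v -> row_inv P (transl g v).
Proof. by move=> v_row pi h h_stab; rewrite /transl -mulgA v_row. Qed.

Lemma avg_row_inv P Q v : row_inv P v -> row_inv P (avg Q v).
Proof.
move=> v_row pi h h_stab; rewrite /avg; congr (_ * _).
by apply: eq_bigr => g _; rewrite -mulgA v_row.
Qed.

Lemma avg_col_inv Q v : col_inv Q (avg Q v).
Proof.
move=> pi g g_stab; rewrite /avg; congr (_ * _).
rewrite [RHS](reindex_inj (mulgI g)) /=.
by apply: eq_big => h; [rewrite groupMl | move=> _; rewrite mulgA].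
Qed.

Lemma avg_fix Q v : col_inv Q v -> avg Q v = v.
Proof.
move=> v_col; apply: functional_extensionality => pi.
have card_neq0 : INR #|stab Q| <> 0.
  by apply: not_0_INR; apply/eqP; rewrite -lt0n; apply/card_gt0P; exists 1%g.
rewrite /avg (eq_bigr (fun _ => v pi)) => [|g g_stab]; last exact: v_col.
by rewrite big_const iter_Rplus; field.
Qed.

Definition translates (vs : list ('S_n -> R)) : list ('S_n -> R) :=
  List.flat_map (fun v => List.map (transl^~ v) (enum {perm 'I_n})) vs.

Lemma in_translates vs w :
  List.In w (translates vs) <-> exists2 v, List.In v vs & exists g, w = transl g v.
Proof.
rewrite List.in_flat_map; split=> [[v [v_in /List.in_map_iff [g [<- _]]]]|].
  by exists v => //; exists g.
move=> [v v_in [g ->]]; exists v; split=> //.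
by apply/List.in_map_iff; exists g; split=> //; exact: In_enum.
Qed.

Lemma translates_transl vs w g :
  List.In w (translates vs) -> List.In (transl g w) (translates vs).
Proof.
case/in_translates=> v v_in [g' ->]; apply/in_translates; exists v => //.
by exists (g * g')%g; apply: functional_extensionality => pi; rewrite /transl mulgA.
Qed.

Lemma translates_self vs v : List.In v vs -> List.In v (translates vs).
Proof.
move=> v_in; apply/in_translates; exists v => //; exists 1%g.
by apply: functional_extensionality => pi; rewrite /transl mulg1.
Qed.
End Translation.

Section InvariantProjection.
Variable n : nat.
Variables (ws : list ('S_n -> R)) (P : ('S_n -> R) -> 'S_n -> R).
Hypothesis P_proj : is_proj ws P.
Hypothesis ws_transl : forall w g, List.In w ws -> List.In (transl g w) ws.

Lemma proj_transl g x : P (transl g x) = transl g (P x).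
Proof.
apply: (proj_commute P_proj (G' := transl g^-1)) => // [a b|w w_in|w w_in].
- exact: inner_transl.
- by apply: span_gen; exact: ws_transl.
- by apply: span_gen; exact: ws_transl.
Qed.

Lemma proj_col_inv Q w : col_inv Q w -> col_inv Q (P w).
Proof.
move=> w_col pi g g_stab.
have w_fix : transl g w = w by apply: functional_extensionality => y; exact: w_col.
by have := congr1 (fun F => F pi) (proj_transl g w); rewrite w_fix /transl => ->.
Qed.

(* The projection of a [Q]-column-invariant vector is its own average, hence
   lies in the span of the averages of the family. *)
Lemma proj_col_inv_span Q S w : (forall v, List.In v ws -> S (avg Q v)) ->
  col_inv Q w -> span S (P w).
Proof.
move=> avg_S w_col; rewrite -(avg_fix (proj_col_inv w_col)).
apply: span_linear_image (P_proj.1 w) => [|a v c|v v_in]; last exact/span_gen/avg_S.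
  by apply: functional_extensionality => pi; rewrite /avg big1 //; lra.
apply: functional_extensionality => pi.
by rewrite /avg big_split /= -big_distrr /=; ring.
Qed.
End InvariantProjection.

Lemma span_row_col_inv n I J (Rs : I -> {set {set 'I_n}}) (Cs : J -> {set {set 'I_n}})
  (f : 'S_n -> R) :
  span (fun w => exists i, row_inv (Rs i) w) f ->
  span (fun w => exists j, col_inv (Cs j) w) f ->
  span (fun w => exists i j, row_inv (Rs i) w /\ col_inv (Cs j) w) f.
Proof.
move=> f_row f_col; have [vs [vs_row f_vs]] := span_finite f_row.
have ws_row w : List.In w (translates vs) -> exists i, row_inv (Rs i) w.
  case/in_translates=> v /vs_row [i v_row] [g ->].
  by exists i; exact: transl_row_inv.
have f_ws : span (fun w => List.In w (translates vs)) f.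
  by apply: span_mono f_vs => v v_in; apply/span_gen/translates_self.
have [P P_proj] := proj_exists (translates vs).
rewrite -(proj_fix P_proj f_ws).
apply: span_linear_image (proj0 P_proj) (proj_step P_proj) _ f_col => w [j w_col].
apply: (proj_col_inv_span P_proj (@translates_transl _ vs) _ w_col) => v v_in.
have [i v_row] := ws_row v v_in.
by exists i, j; split; [exact: avg_row_inv | exact: avg_col_inv].
Qed.

Section LogLinearSpan.
Variable n : nat.
Implicit Types (Bs : seq ({set {set 'I_n}} * {set {set 'I_n}})) (w f : 'S_n -> R).

Definition Ugen Bs w := exists2 B, B \in Bs & U B.1 B.2 w.

Lemma in_span_iff Bs f : in_span Bs f <-> span (Ugen Bs) f.
Proof.
split=> [[k [c [v [v_gen f_def]]]]|].
  have partial m : (m <= k)%nat ->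
      span (Ugen Bs) (fun pi => \big[Rplus/0]_(i < m) (c i * v i pi)).
    elim: m => [|m IH] m_le.
      have -> : (fun pi => \big[Rplus/0]_(i < 0) (c i * v i pi)) = (fun _ => 0).
        by apply: functional_extensionality => pi; rewrite big_ord0.
      exact: span0.
    have -> : (fun pi => \big[Rplus/0]_(i < m.+1) (c i * v i pi))
              = (fun pi => \big[Rplus/0]_(i < m) (c i * v i pi) + c m * v m pi).
      by apply: functional_extensionality => pi; rewrite big_ord_recr.
    by apply: span_step; [apply: IH; exact: ltnW | exact: v_gen].
  have -> : f = (fun pi => \big[Rplus/0]_(i < k) (c i * v i pi)).
    by apply: functional_extensionality => pi; rewrite f_def.
  exact: partial.
elim=> [|a w c0 _ [k [c [v [v_gen a_def]]]] w_gen].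
  by exists 0%nat, (fun _ => 0), (fun _ _ => 0); split=> // pi; rewrite big_ord0.
exists k.+1, (fun m => if m == k then c0 else c m), (fun m => if m == k then w else v m).
split=> [i i_lt|pi].
  by case: eqP => // /eqP i_neq; apply: v_gen; rewrite ltn_neqAle i_neq -ltnS.
rewrite big_ord_recr /= eqxx a_def; congr (_ + _).
by apply: eq_bigr => i _; rewrite (ltn_eqF (ltn_ord i)).
Qed.
End LogLinearSpan.

Local Close Scope R_scope.

Theorem corollary1 (n s t : nat)
  (Rp : {set {set 'I_n}}) (Rs : 'I_s -> {set {set 'I_n}})
  (Cp : {set {set 'I_n}}) (Cs : 'I_t -> {set {set 'I_n}}) :
  is_partition Rp -> (forall i, is_partition (Rs i)) ->
  is_partition Cp -> (forall j, is_partition (Cs j)) ->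
  (forall i, finer Rp (Rs i)) -> (forall j, finer Cp (Cs j)) ->
  forall p : 'S_n -> R,
    (loglin [seq (Rs i, Cp) | i <- enum 'I_s] p /\
     loglin [seq (Rp, Cs j) | j <- enum 'I_t] p)
    <-> loglin [seq (Rs i, Cs j) | i <- enum 'I_s, j <- enum 'I_t] p.
Proof.
move=> part_R part_Rs part_C part_Cs finer_Rs finer_Cs p.
set X := [seq (Rs i, Cp) | i <- enum 'I_s].
set Y := [seq (Rp, Cs j) | j <- enum 'I_t].
set Z := [seq (Rs i, Cs j) | i <- enum 'I_s, j <- enum 'I_t].
have X_row w : Ugen X w -> span (fun u => exists i, row_inv (Rs i) u) w.
  case=> _ /mapP [i _ ->] /(U_iff_inv _ (part_Rs i) part_C) [w_row _].
  by apply: span_gen; exists i.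
have Y_col w : Ugen Y w -> span (fun u => exists j, col_inv (Cs j) u) w.
  case=> _ /mapP [j _ ->] /(U_iff_inv _ part_R (part_Cs j)) [_ w_col].
  by apply: span_gen; exists j.
have inv_Z w : (exists i j, row_inv (Rs i) w /\ col_inv (Cs j) w) -> span (Ugen Z) w.
  move=> [i [j /(U_iff_inv _ (part_Rs i) (part_Cs j)) w_U]]; apply: span_gen.
  by exists (Rs i, Cs j) => //; apply/allpairsP; exists (i, j); rewrite !mem_enum.
have Z_XY w : Ugen Z w -> span (Ugen X) w /\ span (Ugen Y) w.
  case=> _ /allpairsP [[i j] [_ _ ->]] /= w_U; split; apply: span_gen.
    exists (Rs i, Cp) => /=; first by apply/mapP; exists i; rewrite ?mem_enum.
    exact: (U_finer (part_Rs i) (part_Rs i) part_C (part_Cs j)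
              (finer_refl (P := Rs i)) (finer_Cs j) w_U).
  exists (Rp, Cs j) => /=; first by apply/mapP; exists j; rewrite ?mem_enum.
  exact: (U_finer part_R (part_Rs i) (part_Cs j) (part_Cs j)
            (finer_Rs i) (finer_refl (P := Cs j)) w_U).
rewrite /loglin !in_span_iff.
split=> [[[p_pos [p_sum X_log]] [_ [_ Y_log]]]|[p_pos [p_sum Z_log]]].
  do 2!split=> //; apply: (span_mono inv_Z).
  exact: (span_row_col_inv (span_mono X_row X_log) (span_mono Y_col Y_log)).
by do ![split=> //]; apply: (span_mono _ Z_log) => w /Z_XY [].
Qed.
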